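(* There is a polynomial-time algorithm which, given a finite simple graph $G$, decides whether $crx_1(G)\le 3$, i.e. whether $G$ admits an edge-colouring with at most $3$ colours in which every vertex lies on a rainbow cycle.
   Context: All graphs are finite and simple. An edge-coloured cycle is rainbow if all its edges have distinct colours. For $k\ge 1$, $\mathcal{F}_k$ is the family of graphs in which any $k$ vertices lie on a common cycle. For $G\in\mathcal{F}_k$, a $k$-rainbow cycle colouring of $G$ is an edge-colouring such that any $k$ vertices of $G$ lie on a common rainbow cycle; $crx_k(G)$ is the minimum number of colours in a $k$-rainbow cycle colouring of $G$ (for $G\notin\mathcal{F}_k$ no such colouring exists, so $crx_k(G)\le \ell$ is false for every $\ell$). *)

From mathcomp Require Import all_boot.
Set Implicit Arguments. Unset Strict Implicit. Unset Printing Implicit Defensive.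

(* A finite simple graph on vertex set 'I_n is a symmetric irreflexive
   relation e : rel 'I_n (checked as hypotheses in the theorem). *)

Definition is_graph_cycle (n : nat) (e : rel 'I_n) (c : seq 'I_n) : bool :=
  [&& 3 <= size c, uniq c & cycle e c].

(* An edge-colouring is a function col with col x y = col y x; only its
   values on edges matter.  The edges of the cycle c are the pairs
   (c_i, c_{i+1 mod size c}). *)
Definition cycle_edge_colours (n : nat) (col : 'I_n -> 'I_n -> nat)
    (c : seq 'I_n) : seq nat :=
  map (fun p => col p.1 p.2) (zip c (rot 1 c)).

Definition rainbow (n : nat) (col : 'I_n -> 'I_n -> nat) (c : seq 'I_n) : bool :=
  uniq (cycle_edge_colours col c).

Definition k_rainbow_cycle_colouring (k n : nat) (e : rel 'I_n)
    (col : 'I_n -> 'I_n -> nat) : Prop :=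
  forall S : {set 'I_n}, #|S| = k ->
    exists c : seq 'I_n, [/\ is_graph_cycle e c, rainbow col c & {subset S <= c}].

(* If no k-rainbow cycle
   colouring exists this is false for every l, as in the paper. *)
Definition crx_le (k n : nat) (e : rel 'I_n) (l : nat) : Prop :=
  exists col : 'I_n -> 'I_n -> nat,
    [/\ forall x y, col x y = col y x,
        forall x y, col x y < l
      & k_rainbow_cycle_colouring k e col].

(* Single two-way-infinite tape.  Tape symbols are 'I_s.+3 where 0 is the
   blank, 1 encodes bit 0 and 2 encodes bit 1.  States are 'I_q.+1.
   A transition of None means the machine halts. *)
Inductive move := MoveL | MoveR | Stay.

Record TM := {
  tm_q : nat;
  tm_s : nat;
  tm_start : 'I_tm_q.+1;
  tm_delta : 'I_tm_q.+1 -> 'I_tm_s.+3 -> option ('I_tm_q.+1 * 'I_tm_s.+3 * move);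
  tm_accept : pred 'I_tm_q.+1
}.

Section TMSemantics.
Variable M : TM.
Notation St := 'I_(tm_q M).+1.
Notation Sym := 'I_(tm_s M).+3.

Definition blank : Sym := ord0.
Definition bit_sym (b : bool) : Sym := inord (if b then 2 else 1).

(* configuration: state, left tape (nearest cell first), head symbol,
   right tape (nearest cell first); tape cells beyond are blank. *)
Record config := Config {
  cf_state : St; cf_left : seq Sym; cf_head : Sym; cf_right : seq Sym }.

Definition step (c : config) : option config :=
  match tm_delta (cf_state c) (cf_head c) with
  | None => None
  | Some (q', b, m) =>
    Some match m with
      | Stay => Config q' (cf_left c) b (cf_right c)
      | MoveL => match cf_left c with
                 | [::] => Config q' [::] blank (b :: cf_right c)
                 | a :: l => Config q' l a (b :: cf_right c)
                 end
      | MoveR => match cf_right c with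
                 | [::] => Config q' (b :: cf_left c) blank [::]
                 | a :: r => Config q' (b :: cf_left c) a r
                 end
      end
  end.

Fixpoint run (t : nat) (c : config) : option config :=
  match step c with
  | None => Some c
  | Some c' => if t is t'.+1 then run t' c' else None
  end.

Definition init_config (w : seq bool) : config :=
  match map bit_sym w with
  | [::] => Config (tm_start M) [::] blank [::]
  | a :: r => Config (tm_start M) [::] a r
  end.
End TMSemantics.

Definition encode_graph (n : nat) (e : rel 'I_n) : seq bool :=
  [seq e i j | i <- enum 'I_n, j <- enum 'I_n].

Definition decides_graph_property_in_poly_time
    (M : TM) (P : forall n, rel 'I_n -> Prop) : Prop :=
  exists a d : nat,
    forall (n : nat) (e : rel 'I_n), symmetric e -> irreflexive e ->
      let w := encode_graph e in
      exists cf, @run M (a * (size w).+1 ^ d) (@init_config M w) = Some cf /\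
                 (tm_accept (@cf_state M cf) <-> P n e).

From mathcomp Require Import all_boot zify.
Set Implicit Arguments. Unset Strict Implicit. Unset Printing Implicit Defensive.

(* A rainbow cycle in a 3-edge-colouring has at most 3 edges, so crx_1(G) <= 3
   forces every vertex onto a triangle.  Conversely, take a minimal family of
   triangles covering the vertices: each member (a, b, c) has a vertex a lying
   on no other member.  Colour ab, ac, bc with 1, 2, 0 and all remaining edges
   with 0; the edges at a are coloured by this triangle only, and since b and c
   are private to no member, bc keeps colour 0, so every member is rainbow.
   Deciding whether every vertex lies on a triangle is an O(n^3) scan of the
   adjacency matrix, done by a register machine whose registers address the
   input; a single-tape Turing machine stores each register as a marker on the
   input cells and simulates one register machine step by a sweep over the tape,
   in O(n^2) moves. *)

(** * Rainbow colourings and triangles *)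

Lemma rainbow_size_le n (col : 'I_n -> 'I_n -> nat) (l : nat) (c : seq 'I_n) :
  (forall x y, col x y < l) -> rainbow col c -> size c <= l.
Proof.
move=> col_lt rb; have := uniq_leq_size (s2 := iota 0 l) rb.
rewrite size_map size_zip size_rot minnn size_iota; apply.
by move=> _ /mapP [p _ ->]; rewrite mem_iota col_lt.
Qed.

Section Triangles.
Variables (n : nat) (e : rel 'I_n).
Hypothesis e_sym : symmetric e.

Definition on_triangle (v : 'I_n) : Prop := exists u w, [&& e v u, e u w & e v w].

Lemma crx1_le3_on_triangle : crx_le 1 e 3 -> forall v, on_triangle v.
Proof.
move=> [col [_ col_lt col_rb]] v.
have [c [/and3P [c3 uc cyc] rb sub]] := col_rb [set v] (cards1 v).
have vc : v \in c by apply: sub; rewrite in_set1.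
have {c3} : size c = 3 by apply/eqP; rewrite eqn_leq c3 (rainbow_size_le col_lt rb).
case: c uc cyc vc {sub rb} => [|x [|y [|z [|]]]] //= _ .
rewrite !andbT => /and3P [exy eyz ezx].
rewrite !inE => /or3P [] /eqP -> _.
- by exists y, z; rewrite exy eyz e_sym ezx.
- by exists z, x; rewrite eyz ezx e_sym exy.
- by exists x, y; rewrite ezx exy e_sym eyz.
Qed.

Notation triple := ('I_n * 'I_n * 'I_n)%type.

Definition triangle (t : triple) := [&& e t.1.1 t.1.2, e t.1.2 t.2 & e t.1.1 t.2].
Definition in_triple (v : 'I_n) (t : triple) := [|| v == t.1.1, v == t.1.2 | v == t.2].
Definition triangle_cover (F : {set triple}) :=
  [forall v, [exists t in F, in_triple v t]] && [forall t in F, triangle t].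

Definition private_vertex (F : {set triple}) (t : triple) (v : 'I_n) :=
  [forall t' in F, in_triple v t' ==> (t' == t)].

Definition rooted_triangle_cover (F : {set triple}) :=
  triangle_cover F && [forall f in F, private_vertex F f f.1.1].

Lemma minimal_triangle_cover_private F t : minset triangle_cover F -> t \in F ->
  exists2 v, in_triple v t & private_vertex F t v.
Proof.
move=> /minsetP [/andP [covF triF] minF] tF.
have : ~~ triangle_cover (F :\ t).
  by apply/negP => /minF /(_ (subsetDl _ _)) /setP /(_ t); rewrite !inE eqxx tF.
rewrite /triangle_cover negb_and => /orP [|/forallPn [t']]; last first.
  rewrite negb_imply inE => /andP [/andP [_ t'F]].
  by move: triF => /forallP /(_ t') /implyP /(_ t'F) ->.
move=> /forallPn [v /existsPn vF].
have [t0 /andP [t0F vt0]] := existsP (forallP covF v).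
have nvF t' : t' \in F -> in_triple v t' -> t' = t.
  by move=> t'F vt'; apply/eqP/negPn/negP => ne; have := vF t'; rewrite !inE ne t'F vt'.
exists v; first by rewrite -(nvF t0).
by apply/forall_inP => t' t'F; apply/implyP => /(nvF t' t'F) ->.
Qed.

Definition rotate_to (v : 'I_n) (t : triple) : triple :=
  if v == t.1.1 then t else if v == t.1.2 then (t.1.2, t.2, t.1.1) else (t.2, t.1.1, t.1.2).

Lemma in_triple_rotate v x t : in_triple x (rotate_to v t) = in_triple x t.
Proof.
case: t => [[a b] c]; rewrite /rotate_to /in_triple /=.
by case: ifP => _ /=; [|case: ifP => _ /=]; case: (x == a); case: (x == b); case: (x == c).
Qed.

Lemma triangle_rotate v t : triangle (rotate_to v t) = triangle t.
Proof.
case: t => [[a b] c]; rewrite /rotate_to /triangle /=.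
case: ifP => _ /=; [|case: ifP => _ /=]; rewrite ?(e_sym c a) ?(e_sym b a) ?(e_sym c b);
  by case: (e a b); case: (e b c); case: (e a c).
Qed.

Lemma rotate_to_in_triple v t : in_triple v t -> (rotate_to v t).1.1 = v.
Proof.
case: t => [[a b] c]; rewrite /rotate_to /in_triple /=.
by case: eqP => [->|_] //; case: eqP => [->|_] //= /eqP.
Qed.

Lemma exists_rooted_triangle_cover :
  (forall v, on_triangle v) -> exists F, rooted_triangle_cover F.
Proof.
move=> tri.
have [G minG] : {G | minset triangle_cover G}.
  apply: ex_minset; exists [set t | triangle t].
  apply/andP; split; last by apply/forall_inP => t; rewrite inE.
  apply/forallP => v; have [u [w tri_v]] := tri v.
  by apply/existsP; exists (v, u, w); rewrite inE /in_triple /triangle /= tri_v eqxx.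
have /minsetP [/andP [covG triG] _] := minG.
pose root t := odflt t.1.1 [pick v | in_triple v t && private_vertex G t v].
have root_private t : t \in G -> in_triple (root t) t && private_vertex G t (root t).
  move=> tG; rewrite /root; case: pickP => [v //|none].
  by have [v vt /(conj vt) /andP] := minimal_triangle_cover_private minG tG; rewrite none.
pose rot t := rotate_to (root t) t.
exists (rot @: G); apply/andP; split; first (apply/andP; split).
- apply/forallP => v; have [t /andP [tG vt]] := existsP (forallP covG v).
  by apply/existsP; exists (rot t); rewrite imset_f // in_triple_rotate.
- apply/forall_inP => _ /imsetP [t tG ->].
  by rewrite triangle_rotate; apply: (forall_inP triG).
- apply/forall_inP => _ /imsetP [t tG ->]; apply/forall_inP => _ /imsetP [t' t'G ->].
  have /andP [rt /forall_inP /(_ t' t'G) priv] := root_private t tG.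
  by rewrite rotate_to_in_triple // in_triple_rotate; apply/implyP => /(implyP priv) /eqP ->.
Qed.

Hypothesis e_irr : irreflexive e.

Definition root_colour (F : {set triple}) (x y : 'I_n) : nat :=
  if [exists f in F, (f.1.1 == x) && (f.1.2 == y)] then 1
  else if [exists f in F, (f.1.1 == x) && (f.2 == y)] then 2 else 0.

Lemma rooted_triangle_cover_crx1_le3 F : rooted_triangle_cover F -> crx_le 1 e 3.
Proof.
move=> /andP [/andP [covF triF] /forall_inP rootF].
have rooted f f' : f \in F -> f' \in F -> in_triple f'.1.1 f -> f = f'.
  by move=> fF f'F /(implyP (forall_inP (rootF f' f'F) f fF)) /eqP.
pose g := root_colour F.
have g_lt x y : g x y < 3 by rewrite /g /root_colour; case: ifP => //; case: ifP.
have g_root x y : g x y != 0 -> exists2 f, f \in F & f.1.1 == x.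
  rewrite /g /root_colour; case: existsP => [[f /and3P [fF fx _]] _|_]; first by exists f.
  by case: existsP => [[f /and3P [fF fx _]] _|_] //; exists f.
exists (fun x y => maxn (g x y) (g y x)); split.
- by move=> x y; rewrite maxnC.
- by move=> x y; rewrite gtn_max !g_lt.
move=> S /eqP /cards1P [v ->].
have [f /andP [fF vf]] := existsP (forallP covF v).
move: f fF (forall_inP triF f fF) vf => [[a b] c] fF /and3P [/= eab ebc eac] vf.
have nab : a != b by apply: contraTneq eab => ->; rewrite e_irr.
have nbc : b != c by apply: contraTneq ebc => ->; rewrite e_irr.
have nac : a != c by apply: contraTneq eac => ->; rewrite e_irr.
have g0 x y : x \in [:: b; c] -> g x y = 0.
  rewrite !inE => xbc; apply/eqP/negPn/negP => /g_root [f' f'F /eqP f'x].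
  have : in_triple f'.1.1 (a, b, c) by rewrite f'x /in_triple /= xbc orbT.
  move/(rooted _ _ fF f'F) => ff'; move: f'x; rewrite -ff' /= => ax.
  by move: xbc; rewrite -ax (negbTE nab) (negbTE nac).
have gab : g a b = 1.
  by rewrite /g /root_colour; case: existsP => // [[]]; exists (a, b, c); rewrite fF !eqxx.
have gac : g a c = 2.
  rewrite /g /root_colour; case: existsP => [[f' /and3P [f'F /eqP f'a /eqP f'c]]|_].
    have : in_triple f'.1.1 (a, b, c) by rewrite f'a /in_triple eqxx.
    by move/(rooted _ _ fF f'F) => ff'; move: f'c nbc; rewrite -ff' /= => ->; rewrite eqxx.
  by case: existsP => // [[]]; exists (a, b, c); rewrite fF !eqxx.
exists [:: a; b; c]; split.
- rewrite /is_graph_cycle /= !inE (negbTE nab) (negbTE nac) (negbTE nbc) /=.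
  by rewrite eab ebc e_sym eac.
- by rewrite /rainbow /cycle_edge_colours /= gab gac !g0 ?inE ?eqxx ?orbT.
- by move=> x; rewrite inE => /eqP ->; move: vf; rewrite /in_triple /= !inE.
Qed.

Lemma crx1_le3_iff_on_triangle : crx_le 1 e 3 <-> forall v, on_triangle v.
Proof.
split; first exact: crx1_le3_on_triangle.
by move=> /exists_rooted_triangle_cover [F /rooted_triangle_cover_crx1_le3].
Qed.

End Triangles.

(** * A register machine testing the triangle property *)

Inductive instr :=
| IInit (p : nat) | IZero (x : 'I_11) (p : nat) | ICopy (x y : 'I_11) (p : nat)
| IInc (x : 'I_11) (p : nat)
| IEq (x y : 'I_11) (p1 p2 : nat) | ILast (x : 'I_11) (p1 p2 : nat)
| IBit (x : 'I_11) (p1 p2 : nat)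
| ISetF (b : bool) (p : nat) | ITestF (p1 p2 : nat) | IHalt (b : bool).

Definition rC : 'I_11 := @Ordinal 11 0 isT.
Definition rQ : 'I_11 := @Ordinal 11 1 isT.
Definition rA : 'I_11 := @Ordinal 11 2 isT.
Definition rB : 'I_11 := @Ordinal 11 3 isT.
Definition rI : 'I_11 := @Ordinal 11 4 isT.
Definition rJ : 'I_11 := @Ordinal 11 5 isT.
Definition rK : 'I_11 := @Ordinal 11 6 isT.
Definition rP1 : 'I_11 := @Ordinal 11 7 isT.
Definition rP2 : 'I_11 := @Ordinal 11 8 isT.
Definition rP3 : 'I_11 := @Ordinal 11 9 isT.
Definition rRS : 'I_11 := @Ordinal 11 10 isT.

(* With N = n * n the input length, pc 1-12 find n - 1 (left in [rC]): for
   c = 0, 1, ... the counter [rQ] runs through the pairs (rA, rB) <= c up to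
   (c + 1)^2 - 1, and [ILast] tests whether that is N - 1.  Then pc 13-37 scan
   the triples i, j, k < n, with [rP1], [rP2], [rP3] pointing to the entries
   (i, j), (j, k), (i, k) of the adjacency matrix and [rRS] saving i n; the
   flag records whether vertex i lies on a triangle found so far. *)
Definition prog (pc : nat) : instr :=
  match pc with
  | 0 => IInit 1
  | 1 => IEq rA rC 2 3
  | 2 => IEq rB rC 8 3
  | 3 => IInc rQ 4
  | 4 => IEq rB rC 5 7
  | 5 => IZero rB 6
  | 6 => IInc rA 1
  | 7 => IInc rB 1
  | 8 => ILast rQ 13 9
  | 9 => IInc rC 10
  | 10 => IZero rQ 11
  | 11 => IZero rA 12
  | 12 => IZero rB 1
  | 13 => ITestF 17 14
  | 14 => IBit rP1 15 17
  | 15 => IBit rP2 16 17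
  | 16 => IBit rP3 18 17
  | 17 => IEq rK rC 22 19
  | 18 => ISetF true 17
  | 19 => IInc rK 20
  | 20 => IInc rP2 21
  | 21 => IInc rP3 13
  | 22 => IEq rJ rC 28 23
  | 23 => IInc rJ 24
  | 24 => IZero rK 25
  | 25 => IInc rP1 26
  | 26 => IInc rP2 27
  | 27 => ICopy rP3 rRS 13
  | 28 => ITestF 29 39
  | 29 => IEq rI rC 38 30
  | 30 => IInc rI 31
  | 31 => IZero rK 32
  | 32 => IInc rP1 33
  | 33 => ICopy rRS rP1 34
  | 34 => ICopy rP3 rP1 35
  | 35 => IZero rP2 36
  | 36 => IZero rJ 37
  | 37 => ISetF false 13
  | 38 => IHalt true
  | _ => IHalt false
  end.

Definition rm_state := (nat * bool * seq nat)%type.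

(* Only register values below the input length [N] are visible to the Turing
   machine: [IEq] compares two registers below [N], [ILast] tests for [N - 1]
   and [IBit] reads the input bit addressed by a register. *)
Definition rm_step (N : nat) (bits : seq bool) (s : rm_state) : option rm_state :=
  let: (pc, fl, rs) := s in
  match prog pc with
  | IInit p => Some (p, fl, nseq 11 0)
  | IZero x p => Some (p, fl, set_nth 0 rs x 0)
  | ICopy x y p => Some (p, fl, set_nth 0 rs x (nth 0 rs y))
  | IInc x p => Some (p, fl, set_nth 0 rs x (nth 0 rs x).+1)
  | IEq x y p1 p2 =>
      Some (if (nth 0 rs x == nth 0 rs y) && (nth 0 rs x < N) then p1 else p2, fl, rs)
  | ILast x p1 p2 => Some (if (nth 0 rs x).+1 == N then p1 else p2, fl, rs)
  | IBit x p1 p2 =>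
      Some (if (nth 0 rs x < N) && nth false bits (nth 0 rs x) then p1 else p2, fl, rs)
  | ISetF b p => Some (p, b, rs)
  | ITestF p1 p2 => Some (if fl then p1 else p2, fl, rs)
  | IHalt _ => None
  end.

Fixpoint rm_run (N : nat) (bits : seq bool) (t : nat) (s : rm_state) : option rm_state :=
  match rm_step N bits s with
  | None => Some s
  | Some s' => if t is t'.+1 then rm_run N bits t' s' else None
  end.

Lemma rm_run_mono N bits t k s s' : rm_run N bits t s = Some s' -> rm_run N bits (t + k) s = Some s'.
Proof.
elim: t s => [|t IH] s /=.
  by case E: (rm_step N bits s) => [s''|] // [<-]; case: k => [|k] /=; rewrite E.
by case: (rm_step N bits s) => [s''|] // /IH.
Qed.

Lemma rm_run_variant N bits (inv : rm_state -> nat -> Prop) :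
  (forall s m, inv s m -> rm_step N bits s = None \/
     exists s' m', [/\ rm_step N bits s = Some s', inv s' m' & m' < m]) ->
  forall m s, inv s m ->
  exists s' m', [/\ rm_run N bits m s = Some s', inv s' m' & rm_step N bits s' = None].
Proof.
move=> inv_step; elim/ltn_ind => m IH s inv_s.
case: (inv_step _ _ inv_s) => [halt|[s' [m' [step_s inv_s' lt_m'm]]]].
  by exists s, m; split => //; case: m {IH} inv_s => [|m] _ /=; rewrite halt.
have [s'' [m'' [run_s' inv_s'' halt]]] := IH m' lt_m'm s' inv_s'.
exists s'', m''; split => //.
case: m lt_m'm {IH} inv_s => // m lt_m'm _; rewrite /= step_s.
by rewrite -(subnK (lt_m'm : m' <= m)) addnC; apply: rm_run_mono.
Qed.

Section Prog.
Variables (n : nat) (bits : seq bool).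
Hypothesis n_gt0 : 0 < n.
Local Notation N := (n * n).

Definition tri_bits i j k := [&& nth false bits (i*n+j), nth false bits (j*n+k) & nth false bits (i*n+k)].
Definition tri_found i m := has (fun q => tri_bits i (q %/ n) (q %% n)) (iota 0 m).
Definition covered i := tri_found i N.
Definition all_covered i := all covered (iota 0 i).

Definition search_bound := 30 * (n*n*n) + 100.
Definition sqrt_pot c q d := search_bound + 20 * ((n - c) * (n*n+1) - q) + d.
Definition search_pot i j k d := 30 * (n*n*n - (i*(n*n) + j*n + k)) + d.

(* The invariant at each pc; [m] bounds the number of steps still to run. *)
Definition prog_inv (s : rm_state) (m : nat) : Prop :=
  let: (pc, fl, rs) := s in
  match pc with
  | 0 => fl = false /\ m = sqrt_pot 0 0 11
  | 1 => exists c a b, c < n /\ a <= c /\ b <= c /\ fl = false /\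
      rs = [:: c; a*c.+1+b; a; b; 0;0;0;0;0;0;0] /\ m = sqrt_pot c (a*c.+1+b) 10
  | 2 => exists c b, c < n /\ b <= c /\ fl = false /\
      rs = [:: c; c*c.+1+b; c; b; 0;0;0;0;0;0;0] /\ m = sqrt_pot c (c*c.+1+b) 9
  | 3 => exists c a b, c < n /\ a <= c /\ b <= c /\ ~~((a == c) && (b == c)) /\ fl = false /\
      rs = [:: c; a*c.+1+b; a; b; 0;0;0;0;0;0;0] /\ m = sqrt_pot c (a*c.+1+b) 8
  | 4 => exists c a b, c < n /\ a <= c /\ b <= c /\ ~~((a == c) && (b == c)) /\ fl = false /\
      rs = [:: c; (a*c.+1+b).+1; a; b; 0;0;0;0;0;0;0] /\ m = sqrt_pot c (a*c.+1+b).+1 14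
  | 5 => exists c a, c < n /\ a < c /\ fl = false /\
      rs = [:: c; (a*c.+1+c).+1; a; c; 0;0;0;0;0;0;0] /\ m = sqrt_pot c (a*c.+1+c).+1 13
  | 6 => exists c a, c < n /\ a < c /\ fl = false /\
      rs = [:: c; (a*c.+1+c).+1; a; 0; 0;0;0;0;0;0;0] /\ m = sqrt_pot c (a*c.+1+c).+1 12
  | 7 => exists c a b, c < n /\ a <= c /\ b < c /\ fl = false /\
      rs = [:: c; (a*c.+1+b).+1; a; b; 0;0;0;0;0;0;0] /\ m = sqrt_pot c (a*c.+1+b).+1 12
  | 8 => exists c, c < n /\ fl = false /\
      rs = [:: c; c*c.+1+c; c; c; 0;0;0;0;0;0;0] /\ m = sqrt_pot c (c*c.+1+c) 8
  | 9 => exists c, c.+1 < n /\ fl = false /\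
      rs = [:: c; c*c.+1+c; c; c; 0;0;0;0;0;0;0] /\ m = sqrt_pot c (c*c.+1+c) 7
  | 10 => exists c, c.+1 < n /\ fl = false /\
      rs = [:: c.+1; c*c.+1+c; c; c; 0;0;0;0;0;0;0] /\ m = sqrt_pot c (c*c.+1+c) 6
  | 11 => exists c, c.+1 < n /\ fl = false /\
      rs = [:: c.+1; 0; c; c; 0;0;0;0;0;0;0] /\ m = sqrt_pot c (c*c.+1+c) 5
  | 12 => exists c, c.+1 < n /\ fl = false /\
      rs = [:: c.+1; 0; 0; c; 0;0;0;0;0;0;0] /\ m = sqrt_pot c (c*c.+1+c) 4
  | 13 => exists i j k q a b, i < n /\ j < n /\ k < n /\ all_covered i /\ fl = tri_found i (j*n+k) /\
      rs = [:: n.-1; q; a; b; i; j; k; i*n+j; j*n+k; i*n+k; i*n] /\ m = search_pot i j k 21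
  | 14 => exists i j k q a b, i < n /\ j < n /\ k < n /\ all_covered i /\ fl = false /\ tri_found i (j*n+k) = false /\
      rs = [:: n.-1; q; a; b; i; j; k; i*n+j; j*n+k; i*n+k; i*n] /\ m = search_pot i j k 20
  | 15 => exists i j k q a b, i < n /\ j < n /\ k < n /\ all_covered i /\ fl = false /\ tri_found i (j*n+k) = false /\
      nth false bits (i*n+j) /\
      rs = [:: n.-1; q; a; b; i; j; k; i*n+j; j*n+k; i*n+k; i*n] /\ m = search_pot i j k 19
  | 16 => exists i j k q a b, i < n /\ j < n /\ k < n /\ all_covered i /\ fl = false /\ tri_found i (j*n+k) = false /\
      nth false bits (i*n+j) /\ nth false bits (j*n+k) /\
      rs = [:: n.-1; q; a; b; i; j; k; i*n+j; j*n+k; i*n+k; i*n] /\ m = search_pot i j k 18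
  | 17 => exists i j k q a b, i < n /\ j < n /\ k < n /\ all_covered i /\ fl = tri_found i (j*n+k).+1 /\
      rs = [:: n.-1; q; a; b; i; j; k; i*n+j; j*n+k; i*n+k; i*n] /\ m = search_pot i j k 16
  | 18 => exists i j k q a b, i < n /\ j < n /\ k < n /\ all_covered i /\ fl = false /\ tri_found i (j*n+k) = false /\
      tri_bits i j k /\
      rs = [:: n.-1; q; a; b; i; j; k; i*n+j; j*n+k; i*n+k; i*n] /\ m = search_pot i j k 17
  | 19 => exists i j k q a b, i < n /\ j < n /\ k.+1 < n /\ all_covered i /\ fl = tri_found i (j*n+k).+1 /\
      rs = [:: n.-1; q; a; b; i; j; k; i*n+j; j*n+k; i*n+k; i*n] /\ m = search_pot i j k 15
  | 20 => exists i j k q a b, i < n /\ j < n /\ k.+1 < n /\ all_covered i /\ fl = tri_found i (j*n+k).+1 /\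
      rs = [:: n.-1; q; a; b; i; j; k.+1; i*n+j; j*n+k; i*n+k; i*n] /\ m = search_pot i j k 14
  | 21 => exists i j k q a b, i < n /\ j < n /\ k.+1 < n /\ all_covered i /\ fl = tri_found i (j*n+k).+1 /\
      rs = [:: n.-1; q; a; b; i; j; k.+1; i*n+j; (j*n+k).+1; i*n+k; i*n] /\ m = search_pot i j k 13
  | 22 => exists i j q a b, i < n /\ j < n /\ all_covered i /\ fl = tri_found i (j*n+n.-1).+1 /\
      rs = [:: n.-1; q; a; b; i; j; n.-1; i*n+j; j*n+n.-1; i*n+n.-1; i*n] /\ m = search_pot i j n.-1 15
  | 23 => exists i j q a b, i < n /\ j.+1 < n /\ all_covered i /\ fl = tri_found i (j*n+n.-1).+1 /\
      rs = [:: n.-1; q; a; b; i; j; n.-1; i*n+j; j*n+n.-1; i*n+n.-1; i*n] /\ m = search_pot i j n.-1 14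
  | 24 => exists i j q a b, i < n /\ j.+1 < n /\ all_covered i /\ fl = tri_found i (j*n+n.-1).+1 /\
      rs = [:: n.-1; q; a; b; i; j.+1; n.-1; i*n+j; j*n+n.-1; i*n+n.-1; i*n] /\ m = search_pot i j n.-1 13
  | 25 => exists i j q a b, i < n /\ j.+1 < n /\ all_covered i /\ fl = tri_found i (j*n+n.-1).+1 /\
      rs = [:: n.-1; q; a; b; i; j.+1; 0; i*n+j; j*n+n.-1; i*n+n.-1; i*n] /\ m = search_pot i j n.-1 12
  | 26 => exists i j q a b, i < n /\ j.+1 < n /\ all_covered i /\ fl = tri_found i (j*n+n.-1).+1 /\
      rs = [:: n.-1; q; a; b; i; j.+1; 0; (i*n+j).+1; j*n+n.-1; i*n+n.-1; i*n] /\ m = search_pot i j n.-1 11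
  | 27 => exists i j q a b, i < n /\ j.+1 < n /\ all_covered i /\ fl = tri_found i (j*n+n.-1).+1 /\
      rs = [:: n.-1; q; a; b; i; j.+1; 0; (i*n+j).+1; (j*n+n.-1).+1; i*n+n.-1; i*n] /\ m = search_pot i j n.-1 10
  | 28 => exists i q a b, i < n /\ all_covered i /\ fl = covered i /\
      rs = [:: n.-1; q; a; b; i; n.-1; n.-1; i*n+n.-1; n.-1*n+n.-1; i*n+n.-1; i*n] /\ m = search_pot i n.-1 n.-1 14
  | 29 => exists i q a b, i < n /\ all_covered i.+1 /\ fl = true /\
      rs = [:: n.-1; q; a; b; i; n.-1; n.-1; i*n+n.-1; n.-1*n+n.-1; i*n+n.-1; i*n] /\ m = search_pot i n.-1 n.-1 13
  | 30 => exists i q a b, i.+1 < n /\ all_covered i.+1 /\ fl = true /\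
      rs = [:: n.-1; q; a; b; i; n.-1; n.-1; i*n+n.-1; n.-1*n+n.-1; i*n+n.-1; i*n] /\ m = search_pot i n.-1 n.-1 12
  | 31 => exists i q a b, i.+1 < n /\ all_covered i.+1 /\ fl = true /\
      rs = [:: n.-1; q; a; b; i.+1; n.-1; n.-1; i*n+n.-1; n.-1*n+n.-1; i*n+n.-1; i*n] /\ m = search_pot i n.-1 n.-1 11
  | 32 => exists i q a b, i.+1 < n /\ all_covered i.+1 /\ fl = true /\
      rs = [:: n.-1; q; a; b; i.+1; n.-1; 0; i*n+n.-1; n.-1*n+n.-1; i*n+n.-1; i*n] /\ m = search_pot i n.-1 n.-1 10
  | 33 => exists i q a b, i.+1 < n /\ all_covered i.+1 /\ fl = true /\
      rs = [:: n.-1; q; a; b; i.+1; n.-1; 0; (i*n+n.-1).+1; n.-1*n+n.-1; i*n+n.-1; i*n] /\ m = search_pot i n.-1 n.-1 9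
  | 34 => exists i q a b, i.+1 < n /\ all_covered i.+1 /\ fl = true /\
      rs = [:: n.-1; q; a; b; i.+1; n.-1; 0; (i*n+n.-1).+1; n.-1*n+n.-1; i*n+n.-1; (i*n+n.-1).+1] /\ m = search_pot i n.-1 n.-1 8
  | 35 => exists i q a b, i.+1 < n /\ all_covered i.+1 /\ fl = true /\
      rs = [:: n.-1; q; a; b; i.+1; n.-1; 0; (i*n+n.-1).+1; n.-1*n+n.-1; (i*n+n.-1).+1; (i*n+n.-1).+1] /\ m = search_pot i n.-1 n.-1 7
  | 36 => exists i q a b, i.+1 < n /\ all_covered i.+1 /\ fl = true /\
      rs = [:: n.-1; q; a; b; i.+1; n.-1; 0; (i*n+n.-1).+1; 0; (i*n+n.-1).+1; (i*n+n.-1).+1] /\ m = search_pot i n.-1 n.-1 6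
  | 37 => exists i q a b, i.+1 < n /\ all_covered i.+1 /\ fl = true /\
      rs = [:: n.-1; q; a; b; i.+1; 0; 0; (i*n+n.-1).+1; 0; (i*n+n.-1).+1; (i*n+n.-1).+1] /\ m = search_pot i n.-1 n.-1 5
  | 38 => all_covered n
  | 39 => ~~ all_covered n
  | _ => False
  end.

Lemma tri_foundS i m : tri_found i m.+1 = tri_found i m || tri_bits i (m %/ n) (m %% n).
Proof. by rewrite /tri_found -addn1 iotaD has_cat /= orbF. Qed.
Lemma div_index j k : k < n -> (j*n+k) %/ n = j.
Proof. by move=> kn; rewrite divnMDl // divn_small // addn0. Qed.
Lemma mod_index j k : k < n -> (j*n+k) %% n = k.
Proof. by move=> kn; rewrite modnMDl modn_small. Qed.
Lemma tri_found_next i j k : k < n -> tri_found i (j*n+k).+1 = tri_found i (j*n+k) || tri_bits i j k.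
Proof. by move=> kn; rewrite tri_foundS div_index // mod_index. Qed.
Lemma all_coveredS i : all_covered i.+1 = all_covered i && covered i.
Proof. by rewrite /all_covered -addn1 iotaD all_cat /= andbT. Qed.
Lemma index3_lt i j k : i < n -> j < n -> k < n -> i*(n*n) + j*n + k < n*n*n.
Proof. move=> hi hj hk; nia. Qed.
Lemma sqrt_pot_split c : c < n -> (n - c) * (n*n+1) = (n - c.+1) * (n*n+1) + (n*n+1).
Proof. move=> hc; nia. Qed.
Lemma sqrt_index_lt a b c : a <= c -> b <= c -> c < n -> a * c.+1 + b < (n - c) * (n*n+1).
Proof. move=> ha hb hc; nia. Qed.
Lemma sqrt_square_bound c : c.+1 < n -> c * c.+1 + c + 2 <= n * n.
Proof. move=> hc; nia. Qed.

Ltac seq_congr := repeat match goal with |- cons ?x ?l = cons ?y ?l' =>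
   refine (f_equal2 cons _ _); [ first [reflexivity | lia] | ] end; reflexivity.

Lemma all_covered_at i : i < n -> all_covered n -> covered i.
Proof. by move=> hi /allP; apply; rewrite mem_iota. Qed.

Definition rm_progress (s : rm_state) (m : nat) : Prop :=
  rm_step N bits s = None \/
  exists s' m', [/\ rm_step N bits s = Some s', prog_inv s' m' & m' < m].

Lemma prog_inv_step_sqrt pc fl rs m : pc < 13 ->
  prog_inv (pc, fl, rs) m -> rm_progress (pc, fl, rs) m.
Proof.
move=> hpc; case: pc hpc => [|[|[|[|[|[|[|[|[|[|[|[|[|[|[|[|[|[|[|[|[|[|[|[|[|[|[|[|[|[|[|[|[|[|[|[|[|[|[|[|pc]]]]]]]]]]]]]]]]]]]]]]]]]]]]]]]]]]]]]]]] //= _.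
- move=> [-> ->]; right; rewrite /rm_progress; eexists; exists (sqrt_pot 0 0 10); split => //.
    by exists 0, 0, 0; rewrite mul0n.
  by rewrite /sqrt_pot; lia.
- move=> [c [a [b [hc [ha [hb [-> [-> ->]]]]]]]]; right; rewrite /rm_progress /rm_step /=.
  have aN : a < n * n by nia.
  rewrite aN andbT; case: eqP => [E|/eqP ne]; [subst a|].
    eexists; exists (sqrt_pot c (c*c.+1+b) 9); split => //; first by exists c, b.
    by rewrite /sqrt_pot; lia.
  eexists; exists (sqrt_pot c (a*c.+1+b) 8); split => //.
    by exists c, a, b; rewrite (negbTE ne).
  by rewrite /sqrt_pot; lia.
- move=> [c [b [hc [hb [-> [-> ->]]]]]]; right; rewrite /rm_progress /rm_step /=.
  have bN : b < n * n by nia.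
  rewrite bN andbT; case: eqP => [E|/eqP ne]; [subst b|].
    eexists; exists (sqrt_pot c (c*c.+1+c) 8); split => //; first by exists c.
    by rewrite /sqrt_pot; lia.
  eexists; exists (sqrt_pot c (c*c.+1+b) 8); split => //.
    by exists c, c, b; rewrite eqxx (negbTE ne).
  by rewrite /sqrt_pot; lia.
- move=> [c [a [b [hc [ha [hb [hn [-> [-> ->]]]]]]]]]; right; rewrite /rm_progress /rm_step /=.
  eexists; exists (sqrt_pot c (a*c.+1+b).+1 14); split => //; first by exists c, a, b.
  have := sqrt_index_lt ha hb hc; rewrite /sqrt_pot; lia.
- move=> [c [a [b [hc [ha [hb [hn [-> [-> ->]]]]]]]]]; right; rewrite /rm_progress /rm_step /=.
  have bN : b < n * n by nia.
  rewrite bN andbT; case: eqP => [E|/eqP ne]; [subst b|].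
    have ac : a < c by move: hn; rewrite eqxx andbT ltn_neqAle ha andbT.
    eexists; exists (sqrt_pot c (a*c.+1+c).+1 13); split => //; first by exists c, a.
    by rewrite /sqrt_pot; lia.
  have bc : b < c by rewrite ltn_neqAle ne hb.
  eexists; exists (sqrt_pot c (a*c.+1+b).+1 12); split => //; first by exists c, a, b.
  by rewrite /sqrt_pot; lia.
- move=> [c [a [hc [ha [-> [-> ->]]]]]]; right; rewrite /rm_progress /rm_step /=.
  eexists; exists (sqrt_pot c (a*c.+1+c).+1 12); split => //; first by exists c, a.
  by rewrite /sqrt_pot; lia.
- move=> [c [a [hc [ha [-> [-> ->]]]]]]; right; rewrite /rm_progress /rm_step /=.
  eexists; exists (sqrt_pot c (a*c.+1+c).+1 10); split => //.
    exists c, a.+1, 0; do 4 (split; first lia); split; first by seq_congr.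
    by congr sqrt_pot; lia.
  by rewrite /sqrt_pot; lia.
- move=> [c [a [b [hc [ha [hb [-> [-> ->]]]]]]]]; right; rewrite /rm_progress /rm_step /=.
  eexists; exists (sqrt_pot c (a*c.+1+b).+1 10); split => //.
    exists c, a, b.+1; do 4 (split; first lia); split; first by seq_congr.
    by congr sqrt_pot; lia.
  by rewrite /sqrt_pot; lia.
- move=> [c [hc [-> [-> ->]]]]; right; rewrite /rm_progress /rm_step /=.
  case: eqP => [E|ne].
    have cn : c = n.-1 by nia.
    eexists; exists (search_pot 0 0 0 21); split => //.
      exists 0, 0, 0, (c*c.+1+c), c, c; rewrite !mul0n; do 5 (split; first by []).
      by split; [rewrite cn | ].
    by rewrite /sqrt_pot /search_pot /search_bound; lia.
  have cn : c.+1 < n by apply/negP => cn; apply: ne; nia.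
  eexists; exists (sqrt_pot c (c*c.+1+c) 7); split => //; first by exists c.
  by rewrite /sqrt_pot; lia.
- move=> [c [hc [-> [-> ->]]]]; right; rewrite /rm_progress /rm_step /=.
  eexists; exists (sqrt_pot c (c*c.+1+c) 6); split => //; first by exists c.
  by rewrite /sqrt_pot; lia.
- move=> [c [hc [-> [-> ->]]]]; right; rewrite /rm_progress /rm_step /=.
  eexists; exists (sqrt_pot c (c*c.+1+c) 5); split => //; first by exists c.
  by rewrite /sqrt_pot; lia.
- move=> [c [hc [-> [-> ->]]]]; right; rewrite /rm_progress /rm_step /=.
  eexists; exists (sqrt_pot c (c*c.+1+c) 4); split => //; first by exists c.
  by rewrite /sqrt_pot; lia.
- move=> [c [hc [-> [-> ->]]]]; right; rewrite /rm_progress /rm_step /=.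
  eexists; exists (sqrt_pot c.+1 0 10); split => //.
    by exists c.+1, 0, 0; rewrite mul0n.
  have := sqrt_pot_split (ltnW hc); have := sqrt_square_bound hc; rewrite /sqrt_pot; lia.
Qed.

Lemma prog_inv_step_scan pc fl rs m : 13 <= pc < 22 ->
  prog_inv (pc, fl, rs) m -> rm_progress (pc, fl, rs) m.
Proof.
move=> hpc; case: pc hpc => [|[|[|[|[|[|[|[|[|[|[|[|[|[|[|[|[|[|[|[|[|[|[|[|[|[|[|[|[|[|[|[|[|[|[|[|[|[|[|[|pc]]]]]]]]]]]]]]]]]]]]]]]]]]]]]]]]]]]]]]]] //= _.
- move=> [i [j [k [q [a [b [hi [hj [hk [ha [-> [-> ->]]]]]]]]]]]]; right; rewrite /rm_progress /rm_step /=.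
  case: ifP => hf.
    eexists; exists (search_pot i j k 16); split => //; last by rewrite /search_pot; lia.
    by exists i, j, k, q, a, b; rewrite tri_found_next // hf.
  eexists; exists (search_pot i j k 20); split => //; last by rewrite /search_pot; lia.
  by exists i, j, k, q, a, b.
- move=> [i [j [k [q [a [b [hi [hj [hk [ha [-> [hf [-> ->]]]]]]]]]]]]]; right; rewrite /rm_progress /rm_step /=.
  have hN : i * n + j < n * n by nia.
  rewrite hN /=; case: ifP => hb.
    eexists; exists (search_pot i j k 19); split => //; last by rewrite /search_pot; lia.
    by exists i, j, k, q, a, b.
  eexists; exists (search_pot i j k 16); split => //; last by rewrite /search_pot; lia.
  by exists i, j, k, q, a, b; rewrite tri_found_next // hf /tri_bits hb.
- move=> [i [j [k [q [a [b [hi [hj [hk [ha [-> [hf [hb1 [-> ->]]]]]]]]]]]]]]; right; rewrite /rm_progress /rm_step /=.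
  have hN : j * n + k < n * n by nia.
  rewrite hN /=; case: ifP => hb.
    eexists; exists (search_pot i j k 18); split => //; last by rewrite /search_pot; lia.
    by exists i, j, k, q, a, b.
  eexists; exists (search_pot i j k 16); split => //; last by rewrite /search_pot; lia.
  by exists i, j, k, q, a, b; rewrite tri_found_next // hf /tri_bits hb andbF.
- move=> [i [j [k [q [a [b [hi [hj [hk [ha [-> [hf [hb1 [hb2 [-> ->]]]]]]]]]]]]]]]; right; rewrite /rm_progress /rm_step /=.
  have hN : i * n + k < n * n by nia.
  rewrite hN /=; case: ifP => hb.
    eexists; exists (search_pot i j k 17); split => //; last by rewrite /search_pot; lia.
    by exists i, j, k, q, a, b; rewrite /tri_bits hb1 hb2 hb.
  eexists; exists (search_pot i j k 16); split => //; last by rewrite /search_pot; lia.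
  by exists i, j, k, q, a, b; rewrite tri_found_next // hf /tri_bits hb !andbF.
- move=> [i [j [k [q [a [b [hi [hj [hk [ha [-> [-> ->]]]]]]]]]]]]; right; rewrite /rm_progress /rm_step /=.
  have hN : k < n * n by nia.
  rewrite hN andbT; case: eqP => [E|ne].
    eexists; exists (search_pot i j n.-1 15); split => //; last by rewrite /search_pot E; lia.
    by exists i, j, q, a, b; rewrite -E.
  eexists; exists (search_pot i j k 15); split => //; last by rewrite /search_pot; lia.
  by exists i, j, k, q, a, b; do !split => //; lia.
- move=> [i [j [k [q [a [b [hi [hj [hk [ha [_ [hf [ht [-> ->]]]]]]]]]]]]]]; right; rewrite /rm_progress /rm_step /=.
  eexists; exists (search_pot i j k 16); split => //; last by rewrite /search_pot; lia.
  by exists i, j, k, q, a, b; rewrite tri_found_next // ht orbT.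
- move=> [i [j [k [q [a [b [hi [hj [hk [ha [-> [-> ->]]]]]]]]]]]]; right; rewrite /rm_progress /rm_step /=.
  eexists; exists (search_pot i j k 14); split => //; last by rewrite /search_pot; lia.
  by exists i, j, k, q, a, b.
- move=> [i [j [k [q [a [b [hi [hj [hk [ha [-> [-> ->]]]]]]]]]]]]; right; rewrite /rm_progress /rm_step /=.
  eexists; exists (search_pot i j k 13); split => //; last by rewrite /search_pot; lia.
  by exists i, j, k, q, a, b.
- move=> [i [j [k [q [a [b [hi [hj [hk [ha [-> [-> ->]]]]]]]]]]]]; right; rewrite /rm_progress /rm_step /=.
  eexists; exists (search_pot i j k.+1 21); split => //.
    exists i, j, k.+1, q, a, b; do 4 (split; first by []); split; first by rewrite addnS.
    by split => //; seq_congr.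
  have := index3_lt hi hj hk; rewrite /search_pot; lia.
Qed.

Lemma prog_inv_step_advance pc fl rs m : 22 <= pc ->
  prog_inv (pc, fl, rs) m -> rm_progress (pc, fl, rs) m.
Proof.
move=> hpc; case: pc hpc => [|[|[|[|[|[|[|[|[|[|[|[|[|[|[|[|[|[|[|[|[|[|[|[|[|[|[|[|[|[|[|[|[|[|[|[|[|[|[|[|pc]]]]]]]]]]]]]]]]]]]]]]]]]]]]]]]]]]]]]]]] //= _.
- move=> [i [j [q [a [b [hi [hj [ha [-> [-> ->]]]]]]]]]]; right; rewrite /rm_progress /rm_step /=.
  have hN : j < n * n by nia.
  rewrite hN andbT; case: eqP => [E|ne].
    eexists; exists (search_pot i n.-1 n.-1 14); split => //; last by rewrite /search_pot E; lia.
    exists i, q, a, b; do 2 (split; first by []); split; first by rewrite /covered E; congr tri_found; nia.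
    by rewrite -E.
  eexists; exists (search_pot i j n.-1 14); split => //; last by rewrite /search_pot; lia.
  by exists i, j, q, a, b; do !split => //; lia.
- move=> [i [j [q [a [b [hi [hj [ha [-> [-> ->]]]]]]]]]]; right; rewrite /rm_progress /rm_step /=.
  eexists; exists (search_pot i j n.-1 13); split => //; last by rewrite /search_pot; lia.
  by exists i, j, q, a, b.
- move=> [i [j [q [a [b [hi [hj [ha [-> [-> ->]]]]]]]]]]; right; rewrite /rm_progress /rm_step /=.
  eexists; exists (search_pot i j n.-1 12); split => //; last by rewrite /search_pot; lia.
  by exists i, j, q, a, b.
- move=> [i [j [q [a [b [hi [hj [ha [-> [-> ->]]]]]]]]]]; right; rewrite /rm_progress /rm_step /=.
  eexists; exists (search_pot i j n.-1 11); split => //; last by rewrite /search_pot; lia.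
  by exists i, j, q, a, b.
- move=> [i [j [q [a [b [hi [hj [ha [-> [-> ->]]]]]]]]]]; right; rewrite /rm_progress /rm_step /=.
  eexists; exists (search_pot i j n.-1 10); split => //; last by rewrite /search_pot; lia.
  by exists i, j, q, a, b.
- move=> [i [j [q [a [b [hi [hj [ha [-> [-> ->]]]]]]]]]]; right; rewrite /rm_progress /rm_step /=.
  eexists; exists (search_pot i j.+1 0 21); split => //.
    exists i, j.+1, 0, q, a, b; do 4 (split; first by []); split; first by congr tri_found; lia.
    by split => //; seq_congr.
  have := index3_lt hi hj n_gt0; rewrite /search_pot; lia.
- move=> [i [q [a [b [hi [ha [-> [-> ->]]]]]]]]; right; rewrite /rm_progress /rm_step /=.
  case: ifP => hg.
    eexists; exists (search_pot i n.-1 n.-1 13); split => //; last by rewrite /search_pot; lia.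
    by exists i, q, a, b; rewrite all_coveredS ha hg.
  eexists; exists 0; split => //; last by rewrite /search_pot; lia.
  by apply/negP => /(all_covered_at hi); rewrite hg.
- move=> [i [q [a [b [hi [ha [-> [-> ->]]]]]]]]; right; rewrite /rm_progress /rm_step /=.
  have hN : i < n * n by nia.
  rewrite hN andbT; case: eqP => [E|ne].
    eexists; exists 0; split => //; last by rewrite /search_pot; lia.
    by rewrite /= -(prednK n_gt0) -E.
  eexists; exists (search_pot i n.-1 n.-1 12); split => //; last by rewrite /search_pot; lia.
  by exists i, q, a, b; do !split => //; lia.
- move=> [i [q [a [b [hi [ha [-> [-> ->]]]]]]]]; right; rewrite /rm_progress /rm_step /=.
  eexists; exists (search_pot i n.-1 n.-1 11); split => //; last by rewrite /search_pot; lia.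
  by exists i, q, a, b.
- move=> [i [q [a [b [hi [ha [-> [-> ->]]]]]]]]; right; rewrite /rm_progress /rm_step /=.
  eexists; exists (search_pot i n.-1 n.-1 10); split => //; last by rewrite /search_pot; lia.
  by exists i, q, a, b.
- move=> [i [q [a [b [hi [ha [-> [-> ->]]]]]]]]; right; rewrite /rm_progress /rm_step /=.
  eexists; exists (search_pot i n.-1 n.-1 9); split => //; last by rewrite /search_pot; lia.
  by exists i, q, a, b.
- move=> [i [q [a [b [hi [ha [-> [-> ->]]]]]]]]; right; rewrite /rm_progress /rm_step /=.
  eexists; exists (search_pot i n.-1 n.-1 8); split => //; last by rewrite /search_pot; lia.
  by exists i, q, a, b.
- move=> [i [q [a [b [hi [ha [-> [-> ->]]]]]]]]; right; rewrite /rm_progress /rm_step /=.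
  eexists; exists (search_pot i n.-1 n.-1 7); split => //; last by rewrite /search_pot; lia.
  by exists i, q, a, b.
- move=> [i [q [a [b [hi [ha [-> [-> ->]]]]]]]]; right; rewrite /rm_progress /rm_step /=.
  eexists; exists (search_pot i n.-1 n.-1 6); split => //; last by rewrite /search_pot; lia.
  by exists i, q, a, b.
- move=> [i [q [a [b [hi [ha [-> [-> ->]]]]]]]]; right; rewrite /rm_progress /rm_step /=.
  eexists; exists (search_pot i n.-1 n.-1 5); split => //; last by rewrite /search_pot; lia.
  by exists i, q, a, b.
- move=> [i [q [a [b [hi [ha [_ [-> ->]]]]]]]]; right; rewrite /rm_progress /rm_step /=.
  eexists; exists (search_pot i.+1 0 0 21); split => //.
    exists i.+1, 0, 0, q, a, b; do 4 (split; first by []); split; first by rewrite mul0n.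
    by split => //; seq_congr.
  have := index3_lt hi n_gt0 n_gt0; rewrite /search_pot; lia.
- by left.
- by left.
Qed.

Lemma prog_inv_step s m : prog_inv s m -> rm_progress s m.
Proof.
case: s => [[pc fl] rs]; case: (ltnP pc 13) => [|ge13]; first exact: prog_inv_step_sqrt.
case: (ltnP pc 22) => [lt22|]; last exact: prog_inv_step_advance.
by apply: prog_inv_step_scan; rewrite ge13.
Qed.

Lemma prog_run_correct rs0 :
  exists2 s', rm_run N bits (sqrt_pot 0 0 11) (0, false, rs0) = Some s' &
              prog s'.1.1 = IHalt (all_covered n).
Proof.
have inv0 : prog_inv (0, false, rs0) (sqrt_pot 0 0 11) by [].
have [[[pc fl] rs] [m' [run_s' inv_s' halt_s']]] := rm_run_variant prog_inv_step inv0.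
exists (pc, fl, rs) => //=; move: inv_s' halt_s' {run_s'}.
case: pc => [|[|[|[|[|[|[|[|[|[|[|[|[|[|[|[|[|[|[|[|[|[|[|[|[|[|[|[|[|[|[|[|[|[|[|[|[|[|[|[|pc]]]]]]]]]]]]]]]]]]]]]]]]]]]]]]]]]]]]]]]] //=.
- by move=> ->.
- by move=> /negbTE ->.
Qed.
End Prog.

(** * A single-tape Turing machine simulating it *)

Section TMRuns.
Variable M : TM.

Fixpoint stepn (k : nat) (c : config M) : option (config M) :=
  if k is k'.+1 then (if step c is Some c' then stepn k' c' else None) else Some c.

Lemma stepn1 (c c' : config M) : step c = Some c' -> stepn 1 c = Some c'.
Proof. by rewrite /= => ->. Qed.

Lemma stepn_add k1 k2 c c1 : stepn k1 c = Some c1 -> stepn (k1 + k2) c = stepn k2 c1.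
Proof.
elim: k1 c => [|k1 IH] c /=; first by case=> ->.
by case: (step c) => // c'; apply: IH.
Qed.

Lemma run_stepn k t c c' : stepn k c = Some c' -> run (k + t) c = run t c'.
Proof.
elim: k c => [|k IH] c /=; first by case=> ->.
by case: (step c) => // c2; apply: IH.
Qed.

Lemma run_halted t (c : config M) : step c = None -> run t c = Some c.
Proof. by case: t => [|t] /= ->. Qed.

Lemma run_mono t k (c c' : config M) : run t c = Some c' -> run (t + k) c = Some c'.
Proof.
elim: t c => [|t IH] c /=.
  by case E: (step c) => [c2|] // [<-]; apply: run_halted.
by case: (step c) => [c2|] // /IH.
Qed.

Lemma step_right q L h R q' b : tm_delta q h = Some (q', b, MoveR) ->
  step (Config q L h R) = Some (@Config M q' (b :: L) (head (blank M) R) (behead R)).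
Proof. by rewrite /step /= => ->; case: R. Qed.

Lemma step_left q L h R q' b : tm_delta q h = Some (q', b, MoveL) ->
  step (Config q L h R) = Some (@Config M q' (behead L) (head (blank M) L) (b :: R)).
Proof. by rewrite /step /= => ->; case: L. Qed.

End TMRuns.

(* A tape cell holds an input bit and one marker per register: register [x]
   has value [p] when cell [p] carries the marker of [x]. *)
Definition Cell := (bool * {ffun 'I_11 -> bool})%type.
Definition input_cell (b : bool) : Cell := (b, [ffun => false]).

Notation Sym := 'I_(#|{: Cell}|).+3.

(* Symbols 1 and 2 are the input bits, as fixed by [bit_sym]. *)
Definition decode_cell (a : Sym) : option Cell :=
  match nat_of_ord a with
  | 0 => None
  | 1 => Some (input_cell false)
  | 2 => Some (input_cell true)
  | k.+3 => Some (nth (input_cell false) (enum {: Cell}) k)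
  end.
Definition encode_cell (c : Cell) : Sym := inord (index c (enum {: Cell})).+3.

Lemma decode_encode_cell c : decode_cell (encode_cell c) = Some c.
Proof.
have hi : index c (enum {: Cell}) < #|{: Cell}| by rewrite cardE index_mem mem_enum.
by rewrite /decode_cell /encode_cell inordK // nth_index // mem_enum.
Qed.

Lemma decode_cell_None (a : Sym) : (decode_cell a == None) = (a == ord0).
Proof. by rewrite /decode_cell -val_eqE /=; case: (nat_of_ord a) => [|[|[|k]]]. Qed.

Lemma encode_cell_neq0 c : encode_cell c != ord0.
Proof. by rewrite -decode_cell_None decode_encode_cell. Qed.

(* [inl (pc, fl, (first, acc))]: sweeping right while executing instruction [pc];
   [inr (pc, fl)]: returning to the left end before executing [pc]. *)
Definition control := (('I_40 * bool * (bool * bool)) + ('I_40 * bool))%type.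
Definition control0 : control := inl (ord0, false, (true, false)).

Notation St := 'I_(#|{: control}|).+1.

Definition encode_control (m : control) : St := inord (index m (enum {: control})).
Definition decode_control (q : St) : control := nth control0 (enum {: control}) q.

Lemma decode_encode_control m : decode_control (encode_control m) = m.
Proof.
have h : index m (enum {: control}) < #|{: control}| by rewrite cardE index_mem mem_enum.
by rewrite /decode_control /encode_control inordK ?nth_index ?mem_enum ?(leqW h).
Qed.

Definition set_flag (fl : {ffun 'I_11 -> bool}) x v := [ffun y => if y == x then v else fl y].

(* One cell of the right sweep, carrying (head is on the first cell, accumulator):
   [IInit] puts every marker on the first cell, [IInc] moves a marker one cell
   to the right through the accumulator, [ILast] leaves the marker of the last
   cell in it, and [IEq], [IBit] record whether their test holds at some cell. *)
Definition cell_step (ins : instr) (t : bool * bool) (c : Cell) : (bool * bool) * Cell :=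
  let: (b, fl) := c in let: (first, acc) := t in
  match ins with
  | IInit _ => ((false, acc), (b, [ffun _ => first]))
  | IZero x _ => ((false, acc), (b, set_flag fl x first))
  | ICopy x y _ => ((false, acc), (b, set_flag fl x (fl y)))
  | IInc x _ => ((false, fl x), (b, set_flag fl x acc))
  | IEq x y _ _ => ((false, acc || fl x && fl y), (b, fl))
  | ILast x _ _ => ((false, fl x), (b, fl))
  | IBit x _ _ => ((false, acc || fl x && b), (b, fl))
  | _ => ((false, acc), (b, fl))
  end.

Definition next_pc (ins : instr) (fl acc : bool) : nat * bool :=
  match ins with
  | IInit p | IZero _ p | ICopy _ _ p | IInc _ p => (p, fl)
  | IEq _ _ p1 p2 | ILast _ p1 p2 | IBit _ p1 p2 => (if acc then p1 else p2, fl)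
  | ISetF b p => (p, b)
  | ITestF p1 p2 => (if fl then p1 else p2, fl)
  | IHalt _ => (0, fl)
  end.

(* A blank seen while still on the first cell means the input is empty: halt. *)
Definition delta (q : St) (a : Sym) : option (St * Sym * move) :=
  match decode_control q with
  | inl (pc, fl, t) =>
    match prog pc with
    | IHalt _ => None
    | ins => match decode_cell a with
             | None => if t.1 then None else
                 let: (p', fl') := next_pc ins fl t.2 in
                 Some (encode_control (inr (inord p', fl')), ord0, MoveL)
             | Some c => let: (t', c') := cell_step ins t c in
                 Some (encode_control (inl (pc, fl, t')), encode_cell c', MoveR)
             end
    end
  | inr (pc, fl) => match decode_cell a with
    | None => Some (encode_control (inl (pc, fl, (true, false))), a, MoveR)
    | Some _ => Some (q, a, MoveL)
    end
  end.

(* On the empty input the machine halts in its start state, which must accept: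
   the empty graph has the property vacuously. *)
Definition accepting (q : St) : bool :=
  match decode_control q with
  | inl (pc, _, _) => match prog pc with IHalt b => b | IInit _ => true | _ => false end
  | inr _ => false
  end.

Definition machine : TM :=
  @Build_TM #|{: control}| #|{: Cell}| (encode_control control0) delta accepting.

Lemma decode_bit_sym b : decode_cell (bit_sym machine b) = Some (input_cell b).
Proof. by case: b; rewrite /decode_cell /bit_sym inordK. Qed.
Definition running (i : instr) := if i is IHalt _ then false else true.

Lemma delta_cell (pc : 'I_40) fl t a c : running (prog pc) -> decode_cell a = Some c ->
  delta (encode_control (inl (pc, fl, t))) a =
  Some (encode_control (inl (pc, fl, (cell_step (prog pc) t c).1)), encode_cell (cell_step (prog pc) t c).2, MoveR).
Proof.
rewrite /delta decode_encode_control => nh ->.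
by case: (prog pc) nh => //= *; case: (cell_step _ t c) => [t' c'].
Qed.

Lemma delta_end (pc : 'I_40) fl t : running (prog pc) -> t.1 = false ->
  delta (encode_control (inl (pc, fl, t))) ord0 =
  Some (encode_control (inr (inord (next_pc (prog pc) fl t.2).1, (next_pc (prog pc) fl t.2).2)), ord0, MoveL).
Proof.
rewrite /delta decode_encode_control => nh t1.
have -> : decode_cell ord0 = None by apply/eqP; rewrite decode_cell_None.
by rewrite t1; case: (prog pc) nh.
Qed.

Lemma delta_lcell (pc : 'I_40) fl a : a != ord0 ->
  delta (encode_control (inr (pc, fl))) a = Some (encode_control (inr (pc, fl)), a, MoveL).
Proof.
rewrite /delta decode_encode_control -decode_cell_None; by case: (decode_cell a).
Qed.

Lemma delta_lend (pc : 'I_40) fl :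
  delta (encode_control (inr (pc, fl))) ord0 = Some (encode_control (inl (pc, fl, (true, false))), ord0, MoveR).
Proof.
rewrite /delta decode_encode_control.
have -> : decode_cell ord0 = None by apply/eqP; rewrite decode_cell_None.
by [].
Qed.

Fixpoint sweep (ins : instr) (t : bool * bool) (cs : seq Cell) : seq Cell * (bool * bool) :=
  match cs with
  | [::] => ([::], t)
  | c :: cs' => let: (t', c') := cell_step ins t c in let: (out, tf) := sweep ins t' cs' in (c' :: out, tf)
  end.

Lemma cell_step_first ins t c : (cell_step ins t c).1.1 = false.
Proof. by case: c t => b fl [f a]; case: ins. Qed.

Lemma sweep_cons ins t c cs : sweep ins t (c :: cs) =
  ((cell_step ins t c).2 :: (sweep ins (cell_step ins t c).1 cs).1, (sweep ins (cell_step ins t c).1 cs).2).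
Proof. by rewrite /=; case: (cell_step ins t c) => t' c'; case: (sweep ins t' cs). Qed.

Lemma sweep_size ins t cs : size (sweep ins t cs).1 = size cs.
Proof. by elim: cs t => [|c cs IH] t //; rewrite sweep_cons /= IH. Qed.

Lemma sweep_first ins t c cs : (sweep ins t (c :: cs)).2.1 = false.
Proof.
elim: cs c t => [|c2 cs IH] c t; rewrite sweep_cons /=; first exact: cell_step_first.
exact: IH.
Qed.

Lemma run_right_sweep (pc : 'I_40) fl t cs ss Lr pad : running (prog pc) ->
  map decode_cell ss = map Some cs -> all (eq_op^~ ord0) pad ->
  stepn (size cs) (@Config machine (encode_control (inl (pc, fl, t))) Lr (head ord0 (ss ++ pad)) (behead (ss ++ pad)))
  = Some (@Config machine (encode_control (inl (pc, fl, (sweep (prog pc) t cs).2)))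
         (rev (map encode_cell (sweep (prog pc) t cs).1) ++ Lr) ord0 (behead pad)).
Proof.
move=> nh; elim: cs ss t Lr => [|c cs IH] [|s ss] t Lr //=.
  by move=> _; case: pad => [|p pad] // /andP [/eqP -> _].
case=> ds Hss Hp.
rewrite (step_right (M := machine) _ _ (delta_cell fl t nh ds)).
rewrite (IH _ _ _ Hss Hp); case: (cell_step (prog pc) t c) => [t1 c1] /=; case: (sweep (prog pc) t1 cs) => [out tf] /=.
by rewrite rev_cons cat_rcons.
Qed.

Lemma run_left_sweep (pc : 'I_40) fl xs L0 R : all (fun x => x != ord0) xs -> all (eq_op^~ ord0) L0 ->
  stepn (size xs) (@Config machine (encode_control (inr (pc, fl))) (behead (xs ++ L0)) (head ord0 (xs ++ L0)) R)
  = Some (@Config machine (encode_control (inr (pc, fl))) (behead L0) ord0 (rev xs ++ R)).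
Proof.
move=> + HL; elim: xs R => [|x xs IH] R /=.
  by case: L0 HL => [|l L0] // /andP [/eqP -> _].
case/andP=> nx Hx.
rewrite (step_left (M := machine) _ _ (delta_lcell pc fl nx)) IH //.
by rewrite rev_cons cat_rcons.
Qed.

Definition tape_config (pc : 'I_40) fl (cs : seq Cell) (c : config machine) : Prop :=
  exists L0 pad ss, [/\ c = @Config machine (encode_control (inl (pc, fl, (true, false)))) L0
                            (head ord0 (ss ++ pad)) (behead (ss ++ pad)),
     all (eq_op^~ ord0) L0, all (eq_op^~ ord0) pad & map decode_cell ss = map Some cs].

Lemma round_trip (pc : 'I_40) fl cs c :
  running (prog pc) -> cs != [::] -> tape_config pc fl cs c ->
  let: (out, (_, acc)) := sweep (prog pc) (true, false) cs in
  let: (pc', fl') := next_pc (prog pc) fl acc in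
  exists2 c', stepn (2 * size cs + 2) c = Some c' & tape_config (inord pc') fl' out c'.
Proof.
move=> run_pc cs_nil [L0 [pad [ss [-> blank_L0 blank_pad dec_ss]]]].
have right := run_right_sweep fl (true, false) L0 run_pc dec_ss blank_pad.
have first_tf : (sweep (prog pc) (true, false) cs).2.1 = false.
  by case: (cs) cs_nil => // c1 cs1 _; exact: sweep_first.
have turn := step_left (M := machine) (rev (map encode_cell (sweep (prog pc) (true, false) cs).1) ++ L0)
  (behead pad) (delta_end fl run_pc first_tf).
move: right turn; case: (sweep _ _ cs) (sweep_size (prog pc) (true, false) cs) => out [fst acc] /=.
move=> size_out right turn; case: (next_pc _ fl acc) turn => pc' fl' turn.
have out_nz : all (fun x => x != ord0) (rev (map encode_cell out)).
  by rewrite all_rev; apply/allP => x /mapP [y _ ->]; exact: encode_cell_neq0.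
have left := run_left_sweep (inord pc') fl' (ord0 :: behead pad) out_nz blank_L0.
have back := step_right (M := machine) (behead L0)
  (rev (rev (map encode_cell out)) ++ ord0 :: behead pad) (delta_lend (inord pc') fl').
have -> : 2 * size cs + 2 = size cs + (1 + (size (rev (map encode_cell out)) + 1)).
  by rewrite size_rev size_map size_out; set k := size cs; lia.
rewrite (stepn_add _ right) (stepn_add _ (stepn1 turn)) (stepn_add _ left) (stepn1 back).
eexists; first by [].
exists (ord0 :: behead L0), (ord0 :: behead pad), (map encode_cell out); split.
- by rewrite revK.
- by move: blank_L0; case: (L0) => //= l L1 /andP [].
- by move: blank_pad; case: (pad) => //= p pad1 /andP [].
- by rewrite -map_comp; apply: eq_map => x /=; rewrite decode_encode_cell.
Qed.

Lemma sweep_iota_from ins (T : nat -> bool * bool) (C C' : nat -> Cell) :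
  (forall p, cell_step ins (T p) (C p) = (T p.+1, C' p)) ->
  forall off len, sweep ins (T off) (map C (iota off len)) = (map C' (iota off len), T (off + len)).
Proof.
move=> step_T off len; elim: len off => [|len IH] off /=; first by rewrite addn0.
by rewrite step_T IH addSnnS.
Qed.

(* [T p] is the pair carried into cell [p] by the sweep. *)
Lemma sweep_iota ins (T : nat -> bool * bool) (C C' : nat -> Cell) len :
  T 0 = (true, false) -> (forall p, cell_step ins (T p) (C p) = (T p.+1, C' p)) ->
  sweep ins (true, false) (map C (iota 0 len)) = (map C' (iota 0 len), T len).
Proof. by move=> <- step_T; rewrite (sweep_iota_from step_T). Qed.

Section TapeCells.
Variable bits : seq bool.
Local Notation N := (size bits).

Definition cell_at (rs : seq nat) p : Cell :=
  (nth false bits p, [ffun x : 'I_11 => nth 0 rs x == p]).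
Definition tape_cells rs := map (cell_at rs) (iota 0 N).

Lemma set_flag_cell_at rs (x : 'I_11) v p :
  set_flag [ffun y : 'I_11 => nth 0 rs y == p] x (v == p) =
  [ffun y : 'I_11 => nth 0 (set_nth 0 rs x v) y == p].
Proof.
apply/ffunP => y; rewrite !ffunE nth_set_nth /=.
case: (y =P x) => [->|ne]; first by rewrite !eqxx.
have ne' : (y : nat) != x by apply/eqP => E; apply: ne; exact: val_inj.
by rewrite (negbTE ne') ?(introF eqP ne).
Qed.

Lemma sweep_IInit p cs : size cs = N -> map fst cs = map (nth false bits) (iota 0 N) ->
  sweep (IInit p) (true, false) cs = (tape_cells (nseq 11 0), (N == 0, false)).
Proof.
move=> size_cs bits_cs; pose C q := nth (input_cell false) cs q.
have C_bit q : (C q).1 = nth false bits q.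
  case: (ltnP q (size cs)) => hq; last by rewrite /C !nth_default // -size_cs.
  by rewrite /C -(nth_map _ false fst hq) bits_cs (nth_map 0) ?size_iota -?size_cs // nth_iota.
have -> : cs = map C (iota 0 N) by rewrite -size_cs /C -/(mkseq _ _) mkseq_nth.
apply: (@sweep_iota _ (fun q => (q == 0, false))) => // q.
rewrite /cell_at; case: (C q) (C_bit q) => b f /= ->.
congr (_, (_, _)); apply/ffunP => z; rewrite !ffunE.
by rewrite -[[:: 0; 0; 0; 0; 0; 0; 0; 0; 0; 0; 0]]/(nseq 11 0) nth_nseq if_same eq_sym.
Qed.

Lemma sweep_executes pc fl rs pc' fl' rs' cs :
  rm_step N bits (pc, fl, rs) = Some (pc', fl', rs') ->
  size cs = N -> map fst cs = map (nth false bits) (iota 0 N) ->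
  (~~ (if prog pc is IInit _ then true else false) -> cs = tape_cells rs) ->
  (sweep (prog pc) (true, false) cs).1 = tape_cells rs' /\
  next_pc (prog pc) fl (sweep (prog pc) (true, false) cs).2.2 = (pc', fl').
Proof.
move=> + size_cs bits_cs regs_cs; rewrite /rm_step.
case: (prog pc) regs_cs => [p|x p|x y p|x p|x y p1 p2|x p1 p2|x p1 p2|b p|p1 p2|b] regs_cs //;
  case=> <- <- <-; first by rewrite sweep_IInit.
all: rewrite regs_cs // /tape_cells.
- rewrite (@sweep_iota _ (fun q => (q == 0, false)) _ (cell_at (set_nth 0 rs x 0))) //.
  by move=> q; rewrite /cell_at /= -set_flag_cell_at eq_sym.
- rewrite (@sweep_iota _ (fun q => (q == 0, false)) _ (cell_at (set_nth 0 rs x (nth 0 rs y)))) //.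
  by move=> q; rewrite /cell_at /= -set_flag_cell_at ffunE.
- rewrite (@sweep_iota _ (fun q => (q == 0, (nth 0 rs x).+1 == q)) _
    (cell_at (set_nth 0 rs x (nth 0 rs x).+1))) //.
  by move=> q; rewrite /cell_at /= -set_flag_cell_at ffunE eqSS.
- rewrite (@sweep_iota _ (fun q => (q == 0, (nth 0 rs x == nth 0 rs y) && (nth 0 rs x < q)))
    _ (cell_at rs)) //; first by rewrite ltn0 andbF.
  move=> q; rewrite /cell_at /= !ffunE; congr (_, _, _).
  rewrite ltnS; case: ltngtP => h /=; rewrite ?andbT ?andbF ?orbF //.
  by rewrite h eq_sym.
- rewrite (@sweep_iota _ (fun q => (q == 0, (nth 0 rs x).+1 == q)) _ (cell_at rs)) //.
  by move=> q; rewrite /cell_at /= !ffunE eqSS.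
- rewrite (@sweep_iota _ (fun q => (q == 0, (nth 0 rs x < q) && nth false bits (nth 0 rs x)))
    _ (cell_at rs)) //.
  move=> q; rewrite /cell_at /= !ffunE; congr (_, _, _).
  rewrite ltnS; case: ltngtP => h /=; rewrite ?andbF ?orbF //.
  by rewrite h.
- by rewrite (@sweep_iota _ (fun q => (q == 0, false)) _ (cell_at rs)).
- by rewrite (@sweep_iota _ (fun q => (q == 0, false)) _ (cell_at rs)).
Qed.
End TapeCells.

Definition jumps_in_range (i : instr) : bool :=
  match i with
  | IInit p | IZero _ p | ICopy _ _ p | IInc _ p | ISetF _ p => (0 < p < 40)
  | IEq _ _ p1 p2 | ILast _ p1 p2 | IBit _ p1 p2 | ITestF p1 p2 => (0 < p1 < 40) && (0 < p2 < 40)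
  | IHalt _ => true
  end.

Lemma prog_jumps_in_range pc : jumps_in_range (prog pc).
Proof. by do 40 (case: pc => [|pc] //). Qed.

Lemma rm_step_pc N bits pc fl rs pc' fl' rs' :
  rm_step N bits (pc, fl, rs) = Some (pc', fl', rs') -> 0 < pc' < 40.
Proof.
rewrite /rm_step; have := prog_jumps_in_range pc.
case: (prog pc) => [p|x p|x y p|x p|x y p1 p2|x p1 p2|x p1 p2|b p|p1 p2|b] //= H [<- _ _] //;
  by case: ifP => _; case/andP: H.
Qed.

Section Simulation.
Variable bits : seq bool.
Local Notation N := (size bits).
Hypothesis bits_gt0 : 0 < N.

(* Before [IInit] has run the tape holds the bare input, whatever the registers. *)
Definition simulates (s : rm_state) (c : config machine) : Prop :=
  let: (pc, fl, rs) := s in pc < 40 /\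
  exists cs, [/\ tape_config (inord pc) fl cs c, size cs = N,
                 map fst cs = map (nth false bits) (iota 0 N) & (pc != 0 -> cs = tape_cells bits rs)].

Lemma prog_inord pc : pc < 40 -> prog (@inord 39 pc) = prog pc.
Proof. by move=> h; rewrite inordK. Qed.

Lemma simulate_step s s' c : rm_step N bits s = Some s' -> simulates s c ->
  exists2 c', stepn (2 * N + 2) c = Some c' & simulates s' c'.
Proof.
move: s s' => [[pc fl] rs] [[pc' fl'] rs'] step_s [pc_lt [cs [conf_c size_cs bits_cs regs_cs]]].
have run_pc : running (prog (@inord 39 pc)).
  by rewrite prog_inord //; move: step_s; rewrite /rm_step; case: (prog pc).
have cs_nil : cs != [::] by case: (cs) size_cs => //= N0; move: bits_gt0; rewrite -N0.
have := round_trip run_pc cs_nil conf_c; rewrite prog_inord // size_cs.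
have [] := sweep_executes step_s size_cs bits_cs.
  by move=> not_init; apply: regs_cs; apply: contra not_init => /eqP ->.
case: (sweep _ _ cs) => out [fst acc] /= -> -> [c' step_c conf_c'].
exists c' => //; have /andP [_ pc'_lt] := rm_step_pc step_s.
split => //; exists (tape_cells bits rs'); split => //.
- by rewrite /tape_cells size_map size_iota.
- by rewrite /tape_cells -map_comp.
Qed.

Lemma simulate_halt s c : rm_step N bits s = None -> simulates s c -> step c = None.
Proof.
move: s => [[pc fl] rs] H [hpc [cs [[L0 [pad [ss [-> _ _ _]]]] _ _ _]]].
rewrite /step /= /delta decode_encode_control prog_inord //.
by move: H; rewrite /rm_step; case: (prog pc).
Qed.

Lemma simulate_run t s sh c : rm_run N bits t s = Some sh -> simulates s c ->
  exists2 ch, run ((2 * N + 2) * t) c = Some ch & simulates sh ch.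
Proof.
elim: t s c => [|t IH] s c /=.
  case halt: (rm_step N bits s) => [s2|] // [<-] sim_c.
  by exists c => //; rewrite muln0 /= (simulate_halt halt sim_c).
case step_s: (rm_step N bits s) => [s'|] run_s sim_c.
  have [c' step_c sim_c'] := simulate_step step_s sim_c.
  have [ch run_ch sim_ch] := IH _ _ run_s sim_c'.
  by exists ch => //; rewrite mulnS (run_stepn _ step_c).
move: run_s => [<-]; exists c => //.
by apply: run_halted; apply: simulate_halt step_s sim_c.
Qed.
End Simulation.


(** * The adjacency matrix encoding *)

Lemma nth_allpairs (A B C : Type) (f : A -> B -> C) (s : seq A) (t : seq B) a0 b0 c0 i j :
  i < size s -> j < size t ->
  nth c0 [seq f a b | a <- s, b <- t] (i * size t + j) = f (nth a0 s i) (nth b0 t j).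
Proof.
elim: s i => [|x s IH] [|i] // hi hj; rewrite allpairs_cons nth_cat size_map.
  by rewrite mul0n add0n hj (nth_map b0).
rewrite ifN; last by rewrite -leqNgt mulSn -addnA leq_addr.
by rewrite mulSn -addnA addKn IH.
Qed.

Lemma size_encode_graph n (e : rel 'I_n) : size (encode_graph e) = n * n.
Proof. by rewrite /encode_graph size_allpairs size_enum_ord. Qed.

Lemma nth_encode_graph n (e : rel 'I_n) (i j : 'I_n) :
  nth false (encode_graph e) (i * n + j) = e i j.
Proof.
have := @nth_allpairs _ _ _ e (enum 'I_n) (enum 'I_n) i i false i j.
by rewrite size_enum_ord !nth_ord_enum => ->; rewrite ?size_enum_ord.
Qed.

Lemma all_covered_encode_graph n (e : rel 'I_n) :
  all_covered n (encode_graph e) n <-> forall v, on_triangle e v.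
Proof.
split.
- move=> /allP cov v; have n_gt0 : 0 < n := leq_ltn_trans (leq0n v) (ltn_ord v).
  have : covered n (encode_graph e) v by apply: cov; rewrite mem_iota add0n ltn_ord.
  rewrite /covered /tri_found => /hasP [q]; rewrite mem_iota add0n => hq.
  have hj : q %/ n < n by rewrite ltn_divLR.
  have hk : q %% n < n by rewrite ltn_pmod.
  rewrite /tri_bits (nth_encode_graph e v (Ordinal hj)) (nth_encode_graph e (Ordinal hj) (Ordinal hk)).
  by rewrite (nth_encode_graph e v (Ordinal hk)) => tri; exists (Ordinal hj), (Ordinal hk).
- move=> tri; apply/allP => i; rewrite mem_iota add0n => hi.
  have n_gt0 : 0 < n := leq_ltn_trans (leq0n i) hi.
  have [u [w tri_uw]] := tri (Ordinal hi).
  apply/hasP; exists (u * n + w).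
    by rewrite mem_iota add0n; have := ltn_ord u; have := ltn_ord w; nia.
  rewrite /tri_bits div_index // mod_index //.
  by rewrite !(nth_encode_graph e (Ordinal hi)) nth_encode_graph.
Qed.

Lemma simulates_init bits : 0 < size bits ->
  simulates bits (0, false, [::]) (init_config machine bits).
Proof.
move=> bits_gt0; split => //; exists (map input_cell bits); split => //.
- exists [::], [::], (map (bit_sym machine) bits); split => //.
  + have -> : @inord 39 0 = ord0 by apply: val_inj; rewrite /= inordK.
    by rewrite cats0 /init_config; case: (map (bit_sym machine) bits).
  + by rewrite -!map_comp; apply: eq_map => b /=; rewrite decode_bit_sym.
- by rewrite size_map.
- by rewrite -map_comp map_id map_nth_iota0 // take_size.
Qed.

Lemma simulates_accepting bits s c : simulates bits s c ->
  tm_accept (cf_state c) = if prog s.1.1 is IHalt b then b else accepting (cf_state c).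
Proof.
case: s => [[pc fl] rs] [pc_lt [cs [[L0 [pad [ss [-> _ _ _]]]] _ _ _]]] /=.
by rewrite /accepting decode_encode_control inordK //; case: (prog pc).
Qed.

(* Each register machine step costs one round trip over the tape. *)
Lemma simulation_time_le n :
  (2 * (n * n) + 2) * sqrt_pot n 0 0 11 <= 400 * (n * n).+1 ^ 3.
Proof. by rewrite /sqrt_pot /search_bound !subn0 !expnS expn0; nia. Qed.

Lemma machine_correct n (bits : seq bool) : size bits = n * n ->
  exists cf, run (400 * (size bits).+1 ^ 3) (init_config machine bits) = Some cf /\
             tm_accept (cf_state cf) = all_covered n bits n.
Proof.
move=> size_bits; have [n0|n_gt0] := posnP n.
  have -> : bits = [::] by apply/size0nil; rewrite size_bits n0.
  have halt : step (init_config machine [::]) = None.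
    by rewrite /step /= /delta decode_encode_control.
  exists (init_config machine [::]); split; first exact: run_halted.
  by rewrite /= /accepting decode_encode_control n0.
have bits_gt0 : 0 < size bits by rewrite size_bits muln_gt0 n_gt0.
have [s' rm_run_s' halt_s'] := prog_run_correct bits n_gt0 [::].
rewrite -size_bits in rm_run_s'.
have [cf run_cf sim_cf] := simulate_run bits_gt0 rm_run_s' (simulates_init bits_gt0).
exists cf; split.
  have time_le := simulation_time_le n; rewrite -size_bits in time_le.
  by rewrite -(subnKC time_le); apply: run_mono.
by rewrite (simulates_accepting sim_cf) halt_s'.
Qed.

Theorem theorem1 :
  exists M : TM,
    decides_graph_property_in_poly_time M (fun n e => crx_le 1 e 3).
Proof.
exists machine, 400, 3 => n e e_sym e_irr.
have [cf [run_cf accept_cf]] := machine_correct (size_encode_graph e).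
exists cf; split => //; rewrite accept_cf all_covered_encode_graph.
by rewrite crx1_le3_iff_on_triangle.
Qed.
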